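(* There exists $\alpha_0 = \alpha_0(n) > 1$ such that for every $\alpha_n \ge \alpha_0$ the following holds. There exists a set $\mathcal{E}_0 \subseteq \mathcal{E}$ with the property that for every $K \in \mathcal{K}$ there is an $E \in \mathcal{E}_0$ with $$\alpha_n^{-1}K \subseteq E \subseteq \alpha_n K, \qquad (\ast)$$ and such that $\mathcal{E}_0$ can be partitioned into at most $C(n,\alpha_n)$ classes (''colours''), $C(n,\alpha_n)$ a finite number depending only on $n$ and $\alpha_n$, in such a way that every $K \in \mathcal{K}$ satisfies $(\ast)$ for at most one $E \in \mathcal{E}_0$ of any given colour.
   Context: $\mathcal{E}$ denotes the class of centred ellipsoids in $\mathbb{R}^n$, i.e. images $A(\mathbb{B})$ of the closed unit ball $\mathbb{B}$ under invertible linear maps $A$. $\mathcal{K}$ denotes the class of centrally symmetric convex bodies in $\mathbb{R}^n$. *)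

From HB Require Import structures.
From mathcomp Require Import all_boot all_order all_algebra.
From mathcomp Require Import all_classical all_reals all_analysis.
Set Implicit Arguments. Unset Strict Implicit. Unset Printing Implicit Defensive.
Import Order.TTheory GRing.Theory Num.Theory.
Import numFieldNormedType.Exports.
Local Open Scope classical_set_scope.
Local Open Scope ring_scope.

(* R^n is modelled by row vectors 'rV[R]_n, with the (product) topology
   provided by mathcomp-analysis (matrix_normedtype). *)

Definition sqnorm (R : realType) (n : nat) (x : 'rV[R]_n) : R :=
  \sum_(i < n) x ord0 i ^+ 2.

Definition unit_ball (R : realType) (n : nat) : set 'rV[R]_n :=
  [set x | sqnorm x <= 1].

Definition is_ellipsoid (R : realType) (n : nat) (E : set 'rV[R]_n) : Prop :=
  exists A : 'M[R]_n, A \in unitmx /\ E = [set x *m A | x in @unit_ball R n].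

Definition convex_set (R : realType) (n : nat) (K : set 'rV[R]_n) : Prop :=
  forall x y t, K x -> K y -> 0 <= t -> t <= 1 -> K ((1 - t) *: x + t *: y).

Definition centrally_symmetric (R : realType) (n : nat) (K : set 'rV[R]_n) : Prop :=
  forall x, K x -> K (- x).

Definition is_sym_convex_body (R : realType) (n : nat) (K : set 'rV[R]_n) : Prop :=
  [/\ compact K, convex_set K, (K°) !=set0 & centrally_symmetric K].

Definition dilate (R : realType) (n : nat) (t : R) (K : set 'rV[R]_n) : set 'rV[R]_n :=
  [set t *: x | x in K].

Definition sandwich (R : realType) (n : nat) (alpha : R) (K E : set 'rV[R]_n) : Prop :=
  dilate alpha^-1 K `<=` E /\ E `<=` dilate alpha K.

From Pilot Require Import Defs.
From HB Require Import structures.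
From mathcomp Require Import all_boot all_order all_algebra.
From mathcomp Require Import all_classical all_reals all_analysis.
From mathcomp Require Import ring lra zify.
Import Order.TTheory GRing.Theory Num.Theory.
Import numFieldNormedType.Exports.
Local Open Scope classical_set_scope.
Local Open Scope ring_scope.
Set Implicit Arguments. Unset Strict Implicit. Unset Printing Implicit Defensive.

(* Choose greedily points v_i of K supported on
   the first i+1 coordinates whose i-th coordinate is, up to a factor 2e, as large
   as possible, and rounded to a power e^(k_i).  Size reduction turns the
   triangular matrix of the v_i into a lower triangular T with T_ij = z_ij e^(k_j)
   for integers z_ij, z_ii = 1, whose rows lie in (n+1)^n K; conversely every point
   of K has bounded coordinates in the rows of T, so the image of the unit ball
   under x |-> x T lies between alpha^-1 K and alpha K.  Colour these ellipsoids
   by the residues of the k_i and z_ij modulo some m > alpha^2.  If T1 and T2 both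
   work for the same K, then T1 = C T2 with C lower triangular and |C_ij| <= alpha^2;
   its diagonal is e^(k1_i - k2_i), and inductively C_ij = z1_ij - z2_ij below the
   diagonal, so equal residues force C = 1. *)


Section Dilation.
Variables (R : realType) (n : nat) (K : set 'rV[R]_n).
Hypotheses (convK : Defs.convex_set K) (symK : centrally_symmetric K) (K0 : K 0).

Lemma mem_scale (l : R) x : `|l| <= 1 -> K x -> K (l *: x).
Proof.
have scale_ge0 (m : R) y : 0 <= m -> m <= 1 -> K y -> K (m *: y).
  by move=> m0 m1 Ky; have := convK K0 Ky m0 m1; rewrite scaler0 add0r.
move=> l1 Kx; have [l0|l0] := leP 0 l.
  by apply: scale_ge0 => //; rewrite -(ger0_norm l0).
rewrite -[l]opprK scaleNr -scalerN; apply: scale_ge0; last exact: symK.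
  by rewrite oppr_ge0 ltW.
by rewrite -(ltr0_norm l0).
Qed.

Lemma dilate0 s : dilate s K 0.
Proof. by exists 0 => //; rewrite scaler0. Qed.

Lemma dilate1 x : K x -> dilate 1 K x.
Proof. by move=> Kx; exists x => //; rewrite scale1r. Qed.

Lemma le_dilate s t y : 0 <= s -> s <= t -> dilate s K y -> dilate t K y.
Proof.
move=> s0 st [x Kx <-].
have [t0|t0] := eqVneq t 0.
  have s0' : s = 0 by apply/le_anti; rewrite s0 -t0 st.
  by exists x => //; rewrite s0' t0.
have tp : 0 < t by rewrite lt_neqAle eq_sym t0 (le_trans s0).
exists ((s / t) *: x); last by rewrite scalerA mulrCA mulfV // mulr1.
apply: mem_scale => //; rewrite ger0_norm ?divr_ge0 ?(ltW tp) //.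
by rewrite ler_pdivrMr ?mul1r.
Qed.

Lemma dilateD s t u v : 0 <= s -> 0 <= t ->
  dilate s K u -> dilate t K v -> dilate (s + t) K (u + v).
Proof.
move=> s0 t0 [x Kx <-] [y Ky <-].
have [st0|st0] := eqVneq (s + t) 0.
  have -> : s = 0 by lra.
  have -> : t = 0 by lra.
  by exists x => //; rewrite addr0 !scale0r addr0.
have stp : 0 < s + t by rewrite lt_neqAle eq_sym st0 addr_ge0.
exists ((1 - t / (s + t)) *: x + (t / (s + t)) *: y).
  apply: convK => //; first by rewrite divr_ge0 // ltW.
  by rewrite ler_pdivrMr // mul1r lerDr.
by rewrite scalerDr !scalerA; congr (_ *: _ + _ *: _); field.
Qed.

Lemma dilateZ s (l : R) u : 0 <= s -> dilate s K u -> dilate (`|l| * s) K (l *: u).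
Proof.
move=> s0 [x Kx <-]; exists (Num.sg l *: x).
  by apply: mem_scale => //; rewrite normr_sg; case: (_ == _).
by rewrite !scalerA; congr (_ *: _); rewrite [in RHS](numEsg l); ring.
Qed.

Lemma dilateN s u : 0 <= s -> dilate s K u -> dilate s K (- u).
Proof.
by move=> s0 /(dilateZ (-1) s0); rewrite normrN normr1 mul1r scaleN1r.
Qed.

Lemma dilate_mulmx (T : 'M[R]_n) (a : 'rV[R]_n) (b c : R) :
  0 <= b -> 0 <= c -> (forall j, `|a 0 j| <= b) ->
  (forall j, a 0 j != 0 -> dilate c K (row j T)) ->
  dilate (n%:R * (b * c)) K (a *m T).
Proof.
move=> b0 c0 ab aT; rewrite mulmx_sum_row mulr_natl -[n in _ *+ n]card_ord -sumr_const.
suff [] : 0 <= \sum_(j < n) (b * c) /\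
          dilate (\sum_(j < n) (b * c)) K (\sum_(j < n) a 0 j *: row j T) by [].
apply: (big_ind2 (fun s v => 0 <= s /\ dilate s K v)).
- by split => //; apply: dilate0.
- by move=> s1 v1 s2 v2 [s1_ge0 Kv1] [s2_ge0 Kv2]; split; [exact: addr_ge0|exact: dilateD].
move=> j _; split; first exact: mulr_ge0.
have [->|aj0] := eqVneq (a 0 j) 0; first by rewrite scale0r; apply: dilate0.
apply: le_dilate (dilateZ (a 0 j) c0 (aT j aj0)); first exact: mulr_ge0.
exact: ler_wpM2r.
Qed.

End Dilation.

Definition supp_below (R : realType) n (q : nat) (y : 'rV[R]_n) :=
  forall j : 'I_n, (q <= j)%N -> y 0 j = 0.

Lemma trig_rows_span (R : realType) n (T : 'M[R]_n) (q : nat) : (q <= n)%N ->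
  (forall i : 'I_n, (i < q)%N ->
     (forall j : 'I_n, (i < j)%N -> T i j = 0) /\ T i i != 0) ->
  forall y, supp_below q y -> exists2 c, supp_below q c & y = c *m T.
Proof.
elim: q => [|q IH] qn T_trig y ys.
  exists 0; first by move=> j _; rewrite mxE.
  by rewrite mul0mx; apply/rowP => j; rewrite !mxE ys.
pose Q := Ordinal qn; have [TQ0 TQQ] := T_trig Q (ltnSn q).
pose cQ := y 0 Q / T Q Q.
have ys' : supp_below q (y - cQ *: row Q T).
  move=> j qj; rewrite !mxE.
  have [->|jQ] := eqVneq j Q; first by rewrite mulfVK // subrr.
  have qj' : (q < j)%N.
    by rewrite ltn_neqAle qj andbT; apply: contra_neq jQ => jq; apply/val_inj.
  by rewrite ys // TQ0 // mulr0 subr0.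
have [c cs cE] := IH (ltnW qn) (fun i iq => T_trig i (ltnW iq)) _ ys'.
exists (c + cQ *: delta_mx 0 Q).
  move=> j qj; rewrite !mxE cs ?(ltnW qj) //.
  have -> : (j == Q) = false by apply/eqP => jQ; rewrite jQ /= ltnn in qj.
  by rewrite andbF mulr0 addr0.
by rewrite mulmxDl -scalemxAl -rowE -cE subrK.
Qed.

Lemma entry_le_norm (R : realType) n (x : 'rV[R]_n) j : `|x 0 j| <= `|x|.
Proof.
rewrite [leRHS]/Num.norm /= mx_normrE.
by apply/bigmax_geP; right; exists (0, j).
Qed.

Lemma norm_le_entries (R : realType) n (x : 'rV[R]_n) r :
  0 <= r -> (forall j, `|x 0 j| <= r) -> `|x| <= r.
Proof.
move=> r0 xr; rewrite [leLHS]/Num.norm /= mx_normrE.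
by apply/bigmax_leP; split => // -[i j] _ /=; rewrite (ord1 i).
Qed.

Lemma sym_convex_body_box (R : realType) n (K : set 'rV[R]_n) :
  is_sym_convex_body K ->
  exists2 r : R, 0 < r & forall x : 'rV[R]_n, (forall j, `|x 0 j| <= r) -> K x.
Proof.
move=> [_ convK [p /nbhs_ballP [e e0 eK]] symK].
have e2 : 0 < e / 2 by rewrite divr_gt0.
exists (e / 2) => // x xr.
have xe : `|x| < e.
  by rewrite (le_lt_trans (norm_le_entries (ltW e2) xr)) // ltr_pdivrMr ?ltr_pMr; lra.
have Kpx : K (p + x) by apply: eK; rewrite -ball_normE /= opprD addrA subrr add0r normrN.
have Kxp : K (x - p).
  rewrite -[x - p]opprK opprB; apply: symK; apply: eK.
  by rewrite -ball_normE /= opprB addrC subrK.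
have -> : x = (1 - 1 / 2) *: (p + x) + (1 / 2) *: (x - p).
  by apply/rowP => j; rewrite !mxE; field.
by apply: convK => //; lra.
Qed.

Lemma sym_convex_body_bounded (R : realType) n (K : set 'rV[R]_n) :
  is_sym_convex_body K -> exists M : R, forall x, K x -> forall j, `|x 0 j| <= M.
Proof.
move=> [cpK _ _ _]; have [M _ M_bound] := pinfty_ex_gt0 (compact_bounded cpK).
by exists M => x Kx j; apply: le_trans (M_bound x Kx); exact: entry_le_norm.
Qed.

Lemma expR_floor_ln (R : realType) (x : R) : 0 < x ->
  expR (Num.floor (ln x))%:~R <= x < expR 1 * expR (Num.floor (ln x))%:~R.
Proof.
move=> x0; apply/andP; split; first by rewrite -[leRHS](lnK x0) ler_expR floor_le.
rewrite -expRD -[ltLHS](lnK x0) ltr_expR addrC -[1]/((1:int)%:~R) -intrD.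
exact: floorD1_gt.
Qed.

Section CoordinateMaximum.
Variables (R : realType) (n : nat) (K : set 'rV[R]_n) (M r : R).
Hypotheses (convK : Defs.convex_set K) (symK : centrally_symmetric K) (K0 : K 0).
Hypotheses (boundK : forall x, K x -> forall j, `|x 0 j| <= M) (r_gt0 : 0 < r).
Hypothesis boxK : forall x : 'rV[R]_n, (forall j, `|x 0 j| <= r) -> K x.
Variable i : 'I_n.

Lemma coord_near_max : exists x, [/\ K x, supp_below i.+1 x, 0 < x 0 i &
  forall y, K y -> supp_below i.+1 y -> `|y 0 i| <= 2 * x 0 i].
Proof.
pose S := [set `|y 0 i| | y in [set y | K y /\ supp_below i.+1 y]].
have hS : has_sup S.
  split; first by exists `|(0 : 'rV[R]_n) 0 i|, 0 => //; split => // j _; rewrite mxE.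
  by exists M => _ [y [Ky _] <-]; apply: boundK.
have rS : S r.
  exists (\row_j (if j == i then r else 0)); last by rewrite mxE eqxx gtr0_norm.
  split; first by apply: boxK => j; rewrite mxE; case: eqP => _;
    rewrite ?normr0 ?(gtr0_norm r_gt0) // ltW.
  by move=> j ij; rewrite mxE; case: eqP => // ji; rewrite ji ltnn in ij.
have r_sup : r <= sup S := sup_upper_bound hS rS.
have sup2_gt0 : 0 < sup S / 2 by rewrite divr_gt0 // (lt_le_trans r_gt0 r_sup).
have [_ [x [Kx xs] <-] x_sup] := sup_adherent sup2_gt0 hS.
have x_gt0 : 0 < `|x 0 i| by lra.
have near_max y : K y -> supp_below i.+1 y -> `|y 0 i| <= 2 * `|x 0 i|.
  move=> Ky ys; have : `|y 0 i| <= sup S by apply: sup_upper_bound => //; exists y.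
  lra.
have [xi0|xi0] := ltP (x 0 i) 0.
  exists (- x); rewrite mxE -(ltr0_norm xi0); split => //; first exact: symK.
  by move=> j ij; rewrite mxE xs ?oppr0.
by exists x; rewrite -(ger0_norm xi0).
Qed.

Lemma coord_max_expR : exists (v : 'rV[R]_n) (k : int),
  [/\ K v, supp_below i.+1 v, v 0 i = expR k%:~R &
   forall y, K y -> supp_below i.+1 y -> `|y 0 i| <= 2 * expR 1 * expR k%:~R].
Proof.
have [x [Kx xs x_gt0 near_max]] := coord_near_max.
pose k := Num.floor (ln (x 0 i)).
have /andP [k_le k_gt] := expR_floor_ln x_gt0.
exists ((expR k%:~R / x 0 i) *: x), k; split.
- apply: mem_scale => //; rewrite ger0_norm; last by rewrite divr_ge0 ?expR_ge0 ?ltW.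
  by rewrite ler_pdivrMr ?mul1r.
- by move=> j ij; rewrite mxE (xs j ij) mulr0.
- by rewrite mxE mulfVK ?gt_eqF.
- by move=> y Ky ys; have := near_max y Ky ys; rewrite -mulrA; lra.
Qed.

End CoordinateMaximum.

Definition int_trig_row (R : realType) n (d : 'I_n -> R) (i : 'I_n)
    (w : 'I_n -> int) (r : 'rV[R]_n) :=
  w i = 1 /\ forall j, r 0 j = (if (j <= i)%N then (w j)%:~R else 0) * d j.

Definition int_trig_rows (R : realType) n (d : 'I_n -> R) (p : nat)
    (T : 'M[R]_n) (z : 'I_n -> 'I_n -> int) :=
  forall i : 'I_n, (i < p)%N -> int_trig_row d i (z i) (row i T).

Section RowReduction.
Variables (R : realType) (n : nat) (d : 'I_n -> R) (p : 'I_n).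
Variables (T : 'M[R]_n) (z : 'I_n -> 'I_n -> int).
Hypotheses (d_gt0 : forall j, 0 < d j) (Tz : int_trig_rows d p T z).

Lemma int_trig_rows_trig (i : 'I_n) : (i < p)%N ->
  (forall j : 'I_n, (i < j)%N -> T i j = 0) /\ T i i != 0.
Proof.
move=> ip; have [zii Ti] := Tz ip; split.
  by move=> j ij; have := Ti j; rewrite mxE leqNgt ij mul0r.
by have := Ti i; rewrite mxE leqnn zii mul1r => ->; rewrite gt_eqF.
Qed.

Lemma int_trig_row_comb (f : 'I_n -> int) : (forall l : 'I_n, (p <= l)%N -> f l = 0) ->
  exists w, int_trig_row d p w (d p *: delta_mx 0 p + (\row_l (f l)%:~R) *m T).
Proof.
move=> fs; pose g (j l : 'I_n) := f l * (if (j <= l)%N then z l j else 0).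
have g0 (j l : 'I_n) : (p <= j)%N -> g j l = 0.
  move=> pj; rewrite /g; have [lp|pl] := ltnP l p; last by rewrite fs ?mul0r.
  by rewrite leqNgt (leq_trans lp pj) mulr0.
exists (fun j => if j == p then 1 else \sum_l g j l); split; first by rewrite eqxx.
move=> j; rewrite !mxE eqxx /=.
have -> : \sum_l (\row_l (f l)%:~R) 0 l * T l j = (\sum_l g j l)%:~R * d j.
  rewrite rmorph_sum mulr_suml; apply: eq_bigr => l _; rewrite mxE /g /= intrM.
  have [lp|pl] := ltnP l p; last by rewrite fs ?mul0r.
  have [_ Tl] := Tz lp; have := Tl j; rewrite mxE => ->.
  by case: ifP => _; rewrite ?mul0r ?mulr0 ?mul0r // mulrA.
have [->|jp] := eqVneq j p.
  by rewrite leqnn big1 ?mul0r ?addr0 ?mulr1 ?mul1r // => l _; rewrite g0.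
have [pj|jp'] := leqP p j; last by rewrite mulr0 add0r ltnW.
have -> : (j <= p)%N = false.
  apply/negbTE; rewrite -ltnNge ltn_neqAle pj andbT eq_sym.
  by apply: contra_neq jp => h; apply/val_inj.
by rewrite big1 ?mul0r ?mulr0 ?addr0 // => l _; rewrite g0.
Qed.

Variables (K : set 'rV[R]_n) (c : R).
Hypotheses (convK : Defs.convex_set K) (symK : centrally_symmetric K) (K0 : K 0).
Hypotheses (c_ge0 : 0 <= c) (TK : forall i : 'I_n, (i < p)%N -> dilate c K (row i T)).

Lemma reduce_row (v : 'rV[R]_n) : K v -> supp_below p.+1 v -> v 0 p = d p ->
  exists r w, int_trig_row d p w r /\ dilate (1 + n%:R * c) K r.
Proof.
move=> Kv vs vp.
have ws : supp_below p (v - d p *: delta_mx 0 p).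
  move=> j pj; rewrite !mxE.
  have [->|jp] := eqVneq j p; first by rewrite vp !eqxx mulr1 subrr.
  rewrite vs; first by rewrite andbF mulr0 subrr.
  by rewrite ltn_neqAle pj andbT eq_sym; apply: contra_neq jp => h; apply/val_inj.
have [a a_supp vE] := trig_rows_span (ltnW (ltn_ord p)) int_trig_rows_trig ws.
pose f l := Num.floor (a 0 l).
have fs (l : 'I_n) : (p <= l)%N -> f l = 0 by move=> pl; rewrite /f a_supp // floor0.
have [w rw] := int_trig_row_comb fs.
exists (d p *: delta_mx 0 p + (\row_l (f l)%:~R) *m T), w; split => //.
(* only the fractional parts of the coordinates of [v] are left, each in [0, 1) *)
have -> : d p *: delta_mx 0 p + (\row_l (f l)%:~R) *m T =
          v - (a - \row_l (f l)%:~R) *m T.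
  by rewrite mulmxBl -vE; apply/rowP => j; rewrite !mxE; ring.
apply: (dilateD convK) => //; first by rewrite mulr_ge0 ?ler0n.
  exact: dilate1.
apply: (dilateN convK symK K0); first by rewrite mulr_ge0 ?ler0n.
rewrite -[c]mul1r; apply: (dilate_mulmx convK symK K0) => //.
  move=> j; rewrite !mxE ger0_norm; last by rewrite subr_ge0 floor_le.
  by have := floorD1_gt (a 0 j); rewrite intrD /f; lra.
move=> j; rewrite !mxE; have [jp|pj] := ltnP j p; first by move=> _; exact: TK.
by rewrite fs // a_supp // subrr eqxx.
Qed.

End RowReduction.

Section IntegralBasis.
Variables (R : realType) (n : nat) (K : set 'rV[R]_n).
Hypotheses (convK : Defs.convex_set K) (symK : centrally_symmetric K) (K0 : K 0).
Variables (v : 'I_n -> 'rV[R]_n) (d : 'I_n -> R).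
Hypotheses (Kv : forall i, K (v i)) (vs : forall i : 'I_n, supp_below i.+1 (v i)).
Hypotheses (vd : forall i, v i 0 i = d i) (d_gt0 : forall i, 0 < d i).

Lemma int_trig_basis p : (p <= n)%N -> exists T z, int_trig_rows d p T z /\
  forall i : 'I_n, (i < p)%N -> dilate ((n.+1)%:R ^+ p) K (row i T).
Proof.
elim: p => [|p IH] pn; first by exists 0, (fun _ _ => 0).
have [T [z [Tz TK]]] := IH (ltnW pn); pose P := Ordinal pn.
have cp_ge1 : 1 <= (n.+1)%:R ^+ p :> R by rewrite exprn_ege1 // ler1n.
have [r [w [rw rK]]] := reduce_row (p := P) d_gt0 Tz convK symK K0
  (le_trans ler01 cp_ge1) TK (@Kv P) (@vs P) (@vd P).
pose T' := \matrix_(i, j) if i == P then r 0 j else T i j.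
have rowT' i : row i T' = if i == P then r else row i T.
  by apply/rowP => j; rewrite !mxE; case: eqP => _; rewrite ?mxE.
exists T', (fun i => if i == P then w else z i); split => i; rewrite rowT'.
- rewrite ltnS leq_eqVlt => /orP [/eqP iP|ip].
    have -> : i = P by apply/val_inj.
    by rewrite eqxx.
  have -> : (i == P) = false by apply/eqP => iP; rewrite iP ltnn in ip.
  exact: Tz.
- have cp_ge0 := le_trans ler01 cp_ge1.
  rewrite ltnS leq_eqVlt => /orP [/eqP iP|ip].
    have -> : i = P by apply/val_inj.
    rewrite eqxx; apply: (le_dilate convK symK K0 _ _ rK).
      by rewrite addr_ge0 ?mulr_ge0 ?ler0n.
    by rewrite exprS -{2}natr1 mulrDl mul1r; lra.
  have -> : (i == P) = false by apply/eqP => iP; rewrite iP ltnn in ip.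
  apply: (le_dilate convK symK K0 cp_ge0 _ (TK i ip)).
  by rewrite exprS ler_peMl ?ler1n.
Qed.

End IntegralBasis.

Section CoordinateBound.
Variables (R : realType) (n : nat) (K : set 'rV[R]_n).
Hypotheses (convK : Defs.convex_set K) (symK : centrally_symmetric K) (K0 : K 0).
Variables (T : 'M[R]_n) (d : 'I_n -> R) (G c : R).
Hypotheses (G_ge0 : 0 <= G) (c_ge0 : 0 <= c) (d_gt0 : forall i, 0 < d i).
Hypotheses (T_trig : forall i j : 'I_n, (i < j)%N -> T i j = 0).
Hypothesis T_diag : forall i, T i i = d i.
Hypothesis TK : forall i, dilate c K (row i T).
Hypothesis coord_max :
  forall (i : 'I_n) y, K y -> supp_below i.+1 y -> `|y 0 i| <= G * d i.

Lemma trig_coord_bound q : (q <= n)%N -> forall s y, 0 <= s -> dilate s K y ->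
  supp_below q y -> exists a, [/\ supp_below q a, y = a *m T &
    forall j, `|a 0 j| <= s * G * (1 + G * c) ^+ q].
Proof.
have Gc_ge0 : 0 <= 1 + G * c by rewrite addr_ge0 ?mulr_ge0.
elim: q => [|q IH] qn s y s0 Ky ys.
  exists 0; split => [j _||j]; rewrite ?mxE ?normr0 ?mulr_ge0 //.
  by rewrite mul0mx; apply/rowP => j; rewrite !mxE ys.
have [s_eq0|s_neq0] := eqVneq s 0.
  exists 0; split => [j _||j]; rewrite ?mxE ?normr0 ?mulr_ge0 ?exprn_ge0 //.
  by case: Ky => x _ <-; rewrite s_eq0 scale0r mul0mx.
have [x Kx yx] := Ky; pose Q := Ordinal qn.
have xs : supp_below Q.+1 x.
  move=> j Qj; have := ys j Qj; rewrite -yx mxE => /eqP.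
  by rewrite mulf_eq0 (negbTE s_neq0) => /eqP.
pose a0 := y 0 Q / d Q.
have a0_le : `|a0| <= s * G.
  rewrite normrM normfV (gtr0_norm (d_gt0 Q)) ler_pdivrMr // -mulrA.
  by rewrite -yx mxE normrM ger0_norm // ler_wpM2l // coord_max.
have K'y : dilate (s * (1 + G * c)) K (y - a0 *: row Q T).
  rewrite mulrDr mulr1 mulrA; apply: (dilateD convK) => //; first by rewrite !mulr_ge0.
  apply: (dilateN convK symK K0); first by rewrite !mulr_ge0.
  apply: (le_dilate convK symK K0 _ _ (dilateZ convK symK K0 a0 c_ge0 (TK Q))).
    by rewrite mulr_ge0.
  exact: ler_wpM2r.
have y's : supp_below q (y - a0 *: row Q T).
  move=> j qj; rewrite !mxE.
  have [->|jQ] := eqVneq j Q; first by rewrite T_diag /a0 mulfVK ?subrr ?gt_eqF.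
  have Qj : (Q < j)%N.
    by rewrite ltn_neqAle qj andbT eq_sym; apply: contra_neq jQ => h; apply/val_inj.
  by rewrite ys // T_trig // mulr0 subr0.
have [a' [a's a'E a'_le]] := IH (ltnW qn) _ _ (mulr_ge0 s0 Gc_ge0) K'y y's.
exists (a' + a0 *: delta_mx 0 Q); split.
- move=> j qj; rewrite !mxE a's ?(ltnW qj) //.
  have -> : (j == Q) = false by apply/eqP => jQ; rewrite jQ ltnn in qj.
  by rewrite andbF mulr0 addr0.
- by rewrite mulmxDl -scalemxAl -rowE -a'E subrK.
move=> j; rewrite !mxE.
have [->|jQ] := eqVneq j Q.
  rewrite a's // eqxx mulr1 add0r; apply: le_trans a0_le _.
  by rewrite -[leLHS]mulr1 ler_wpM2l ?mulr_ge0 // exprn_ege1 // lerDl mulr_ge0.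
rewrite andbF mulr0 addr0 exprS (le_trans (a'_le j)) //.
by rewrite -!mulrA ler_wpM2l // mulrCA.
Qed.

End CoordinateBound.

Lemma unit_ball_entry (R : realType) n (x : 'rV[R]_n) j : unit_ball x -> `|x 0 j| <= 1.
Proof.
move=> x1; have : x 0 j ^+ 2 <= 1.
  apply: le_trans x1; rewrite /sqnorm (bigD1 j) //= lerDl.
  by apply: sumr_ge0 => i _; apply: sqr_ge0.
by rewrite -real_normK ?num_real // -[leRHS](expr1n _ 2) ler_pXn2r ?nnegrE.
Qed.

Lemma unit_ball_delta (R : realType) n (i : 'I_n) : unit_ball (delta_mx 0 i : 'rV[R]_n).
Proof.
rewrite /unit_ball /sqnorm /= (bigD1 i) //= big1 ?addr0 ?mxE ?eqxx ?expr1n //.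
by move=> j ji; rewrite mxE eqxx (negbTE ji) expr0n.
Qed.

Lemma unit_ball_of_entries (R : realType) n (x : 'rV[R]_n) (t : R) : (0 < n)%N ->
  0 <= t -> n%:R * t <= 1 -> (forall j, `|x 0 j| <= t) -> unit_ball x.
Proof.
move=> n_gt0 t0 nt xt; rewrite /unit_ball /sqnorm /=.
apply: (@le_trans _ _ (\sum_(j < n) t ^+ 2)).
  apply: ler_sum => j _; rewrite -real_normK ?num_real //.
  by rewrite ler_pXn2r ?nnegrE ?normr_ge0.
rewrite sumr_const card_ord -mulr_natl.
have n_ge1 : (1 : R) <= n%:R by rewrite ler1n.
nra.
Qed.

Definition ellipsoid_of (R : realType) n (T : 'M[R]_n) : set 'rV[R]_n :=
  [set x *m T | x in @unit_ball R n].

Definition net_matrix (R : realType) n (T : 'M[R]_n) (k : 'I_n -> int)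
    (z : 'I_n -> 'I_n -> int) :=
  int_trig_rows (fun j => expR (k j)%:~R) n T z.

Section NetMatrix.
Variables (R : realType) (n : nat) (T : 'M[R]_n) (k : 'I_n -> int).
Variable (z : 'I_n -> 'I_n -> int).
Hypothesis Tnet : net_matrix T k z.

Lemma net_matrix_trig : (forall i j : 'I_n, (i < j)%N -> T i j = 0) /\
  (forall i, T i i = expR (k i)%:~R).
Proof.
split=> [i j ij|i]; have [zii Ti] := Tnet (ltn_ord i).
  by have := Ti j; rewrite mxE leqNgt ij mul0r.
by have := Ti i; rewrite mxE leqnn zii mul1r.
Qed.

Lemma net_matrix_unitmx : T \in unitmx.
Proof.
have [T_trig T_diag] := net_matrix_trig.
rewrite unitmxE det_trig; last exact/is_trig_mxP.
by rewrite unitfE; apply/prodf_neq0 => i _; rewrite T_diag gt_eqF ?expR_gt0.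
Qed.

End NetMatrix.

(* [(n+1)^n] dilates K to contain the rows of the basis, and
   [2e (1 + 2e (n+1)^n)^n] bounds the coordinates of points of K in that basis. *)
Definition net_alpha0 (R : realType) n : R :=
  1 + n%:R * ((n.+1)%:R ^+ n + 2 * expR 1 * (1 + 2 * expR 1 * (n.+1)%:R ^+ n) ^+ n).

Lemma net_alpha0_gt1 (R : realType) n : (0 < n)%N -> 1 < net_alpha0 R n.
Proof.
by move=> n_gt0; rewrite /net_alpha0 ltrDl mulr_gt0 ?ltr0n // ltr_pwDr ?exprn_gt0 ?ltr0n.
Qed.

Lemma sym_convex_body0 (R : realType) n (K : set 'rV[R]_n) : is_sym_convex_body K -> K 0.
Proof.
by move=> /sym_convex_body_box [r r_gt0 boxK]; apply: boxK => j; rewrite mxE normr0 ltW.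
Qed.

Lemma exists_net_basis (R : realType) n (K : set 'rV[R]_n) : is_sym_convex_body K ->
  exists T k z, [/\ net_matrix T k z, forall i, dilate ((n.+1)%:R ^+ n) K (row i T) &
    forall (i : 'I_n) y, K y -> supp_below i.+1 y -> `|y 0 i| <= 2 * expR 1 * expR (k i)%:~R].
Proof.
move=> Kbody; have [_ convK _ symK] := Kbody; have K0 := sym_convex_body0 Kbody.
have [r r_gt0 boxK] := sym_convex_body_box Kbody.
have [M boundK] := sym_convex_body_bounded Kbody.
have /choice [vk vkP] : forall i : 'I_n, exists vk : 'rV[R]_n * int,
    [/\ K vk.1, supp_below i.+1 vk.1, vk.1 0 i = expR vk.2%:~R &
     forall y, K y -> supp_below i.+1 y -> `|y 0 i| <= 2 * expR 1 * expR vk.2%:~R].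
  move=> i; have [v [k ?]] := coord_max_expR convK symK K0 boundK r_gt0 boxK i.
  by exists (v, k).
have Kv (i : 'I_n) : K (vk i).1 by case: (vkP i).
have vs (i : 'I_n) : supp_below i.+1 (vk i).1 by case: (vkP i).
have vd (i : 'I_n) : (vk i).1 0 i = expR (vk i).2%:~R by case: (vkP i).
have [T [z [Tnet TK]]] :=
  int_trig_basis convK symK K0 Kv vs vd (fun i => expR_gt0 _) (leqnn n).
exists T, (fun i => (vk i).2), z; split => // [i|i]; first exact: TK.
by case: (vkP i).
Qed.

Lemma exists_net_sandwich (R : realType) n (K : set 'rV[R]_n) (alpha : R) :
  (0 < n)%N -> is_sym_convex_body K -> net_alpha0 R n <= alpha ->
  exists T k z, net_matrix T k z /\ sandwich alpha K (ellipsoid_of T).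
Proof.
move=> n_gt0 Kbody alpha_ge; have [_ convK _ symK] := Kbody; have K0 := sym_convex_body0 Kbody.
have [T [k [z [Tnet TK Kmax]]]] := exists_net_basis Kbody.
have [T_trig T_diag] := net_matrix_trig Tnet.
pose c : R := (n.+1)%:R ^+ n; pose G : R := 2 * expR 1; pose A := G * (1 + G * c) ^+ n.
have c_ge0 : 0 <= c by rewrite exprn_ge0 ?ler0n.
have G_ge0 : 0 <= G by rewrite mulr_ge0 ?expR_ge0.
have A_ge0 : 0 <= A by rewrite mulr_ge0 ?exprn_ge0 ?addr_ge0 ?mulr_ge0.
have nc_ge0 : 0 <= n%:R * c by rewrite mulr_ge0 ?ler0n.
have nA_ge0 : 0 <= n%:R * A by rewrite mulr_ge0 ?ler0n.
have alpha_gt0 : 0 < alpha := lt_le_trans (lt_trans ltr01 (net_alpha0_gt1 R n_gt0)) alpha_ge.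
move: alpha_ge; rewrite /net_alpha0 -/c -/G -/A mulrDr => alpha_ge.
exists T, k, z; split => //; split.
- move=> _ [x Kx <-].
  have xs : supp_below n x by move=> j; rewrite leqNgt ltn_ord.
  have [a [_ xE a_le]] := trig_coord_bound convK symK K0 G_ge0 c_ge0 (fun i => expR_gt0 _)
    T_trig T_diag TK Kmax (leqnn n) ler01 (dilate1 Kx) xs.
  exists (alpha^-1 *: a); last by rewrite -scalemxAl -xE.
  apply: (unit_ball_of_entries (t := A / alpha)) => //.
  + by rewrite divr_ge0 // ltW.
  + by rewrite mulrA ler_pdivrMr // mul1r; lra.
  + move=> j; rewrite mxE normrM normfV (gtr0_norm alpha_gt0) mulrC ler_pM2r ?invr_gt0 //.
    by have := a_le j; rewrite mul1r.
- move=> _ [x x1 <-].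
  apply: (le_dilate convK symK K0 _ _ (dilate_mulmx convK symK K0 ler01 c_ge0
    (fun j => unit_ball_entry j x1) (fun j _ => TK j))); rewrite mul1r //.
  lra.
Qed.

Lemma sandwich_factor (R : realType) n (K : set 'rV[R]_n) (T1 T2 : 'M[R]_n) (a : R) :
  0 < a -> sandwich a K (ellipsoid_of T1) -> sandwich a K (ellipsoid_of T2) ->
  exists C : 'M[R]_n, T1 = C *m T2 /\ forall i j, `|C i j| <= a * a.
Proof.
move=> a_gt0 [_ E1K] [KE2 _].
have rowC i : exists u : 'rV[R]_n, unit_ball u /\ row i T1 = ((a * a) *: u) *m T2.
  have [x Kx xE] : dilate a K (row i T1).
    by apply: E1K; exists (delta_mx 0 i); rewrite -?rowE //; exact: unit_ball_delta.
  have [u u1 uE] : ellipsoid_of T2 (a^-1 *: x) by apply: KE2; exists x.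
  by exists u; rewrite -xE -scalemxAl uE scalerA -mulrA mulfV ?gt_eqF // mulr1.
have [u uP] := choice rowC.
exists (\matrix_i ((a * a) *: u i)); split.
  by apply/row_matrixP => i; rewrite row_mul rowK; case: (uP i).
have aa_ge0 : 0 <= a * a by rewrite mulr_ge0 ?ltW.
move=> i j; rewrite !mxE normrM (ger0_norm aa_ge0) -[leRHS]mulr1 ler_wpM2l //.
by apply: unit_ball_entry; case: (uP i).
Qed.

Section TriangularFactor.
Variables (R : realType) (n : nat) (C T T' : 'M[R]_n).
Hypotheses (T_trig : forall i j : 'I_n, (i < j)%N -> T i j = 0).
Hypothesis T_diag : forall i, T i i != 0.
Hypotheses (T'_trig : forall i j : 'I_n, (i < j)%N -> T' i j = 0) (T'E : T' = C *m T).

Lemma trig_factor_trig (i j : 'I_n) : (i < j)%N -> C i j = 0.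
Proof.
move=> ij.
have T_unit : T \in unitmx.
  rewrite unitmxE det_trig; last exact/is_trig_mxP.
  by rewrite unitfE; apply/prodf_neq0 => l _.
have rowT's : supp_below i.+1 (row i T') by move=> l il; rewrite mxE T'_trig.
have [c cs cE] := trig_rows_span (ltn_ord i) (fun l _ => conj (@T_trig l) (T_diag l)) rowT's.
have rowC : row i C = c by rewrite -[LHS](mulmxK T_unit) -row_mul -T'E cE mulmxK.
by have := congr1 (fun r : 'rV[R]_n => r 0 j) rowC; rewrite /= mxE cs.
Qed.

Lemma trig_factor_diag (i : 'I_n) : T' i i = C i i * T i i.
Proof.
rewrite T'E mxE (bigD1 i) //= big1 ?addr0 // => l li.
have [il|li'] := ltnP i l; first by rewrite trig_factor_trig ?mul0r.
rewrite T_trig ?mulr0 // ltn_neqAle li' andbT.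
by apply: contra_neq li => h; apply/val_inj.
Qed.

Lemma trig_factor_subdiag (i j : 'I_n) : (j < i)%N ->
  (forall l : 'I_n, (j < l)%N -> C i l = (i == l)%:R) -> T' i j = C i j * T j j + T i j.
Proof.
move=> ji Cil; rewrite T'E mxE (bigD1 j) //=; congr (_ + _).
have ij : i != j by rewrite -val_eqE /= gtn_eqF.
rewrite (bigD1 i) //= Cil // eqxx mul1r big1 ?addr0 // => l /andP [lj li].
have [jl|lj'] := ltnP j l; first by rewrite Cil // eq_sym (negbTE li) mul0r.
rewrite T_trig ?mulr0 // ltn_neqAle lj' andbT.
by apply: contra_neq lj => h; apply/val_inj.
Qed.

End TriangularFactor.

Lemma dvdz_norm_lt (R : realType) (x : int) (m : nat) (b : R) :
  (m%:Z %| x)%Z -> `|x%:~R : R| <= b -> b < m%:R -> x = 0.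
Proof.
move=> /dvdzP [q ->] xb bm; apply/eqP; rewrite mulf_eq0; apply/orP; left.
apply/negPn/negP => q_neq0.
suff : (m%:R : R) <= `|(q * m%:Z)%:~R : R| by lra.
rewrite intrM normrM -intr_norm pmulrn ger0_norm ?ler0n //.
have q_ge1 : 1 <= `|q|%:~R :> R by rewrite -[1]/((1:int)%:~R) ler_int; lia.
have m_ge0 : (0 : R) <= m%:R by rewrite ler0n.
nra.
Qed.

Section NetFactor.
Variables (R : realType) (n : nat) (C T T' : 'M[R]_n) (k k' : 'I_n -> int).
Variables (z z' : 'I_n -> 'I_n -> int).
Hypotheses (Tnet : net_matrix T k z) (T'net : net_matrix T' k' z') (T'E : T' = C *m T).

Let T_trig := (net_matrix_trig Tnet).1.
Let T'_trig := (net_matrix_trig T'net).1.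
Let T_diag i : T i i != 0.
Proof. by rewrite (net_matrix_trig Tnet).2 gt_eqF ?expR_gt0. Qed.

Lemma net_factor_trig (i j : 'I_n) : (i < j)%N -> C i j = 0.
Proof. exact: trig_factor_trig T_trig T_diag T'_trig T'E i j. Qed.

Lemma net_factor_diag i : C i i = expR (k' i - k i)%:~R.
Proof.
have := trig_factor_diag T_trig T_diag T'_trig T'E i.
rewrite (net_matrix_trig Tnet).2 (net_matrix_trig T'net).2 intrB expRB => ->.
by rewrite mulfK ?gt_eqF ?expR_gt0.
Qed.

Lemma net_factor_subdiag (i j : 'I_n) : (j < i)%N -> k j = k' j ->
  (forall l : 'I_n, (j < l)%N -> C i l = (i == l)%:R) -> C i j = (z' i j - z i j)%:~R.
Proof.
move=> ji kj Cil; have := trig_factor_subdiag T_trig T'E ji Cil.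
have [_ /(_ j)] := Tnet (ltn_ord i); have [_ /(_ j)] := T'net (ltn_ord i).
rewrite !mxE ltnW // (net_matrix_trig Tnet).2 -kj => -> -> h.
have e_neq0 : expR (k j)%:~R != 0 :> R by rewrite gt_eqF ?expR_gt0.
apply: (mulIf e_neq0); rewrite intrB mulrBl h; ring.
Qed.

End NetFactor.

Section NetUniqueness.
Variables (R : realType) (n : nat) (T1 T2 C1 C2 : 'M[R]_n).
Variables (k1 k2 : 'I_n -> int) (z1 z2 : 'I_n -> 'I_n -> int) (b : R) (m : nat).
Hypotheses (net1 : net_matrix T1 k1 z1) (net2 : net_matrix T2 k2 z2).
Hypotheses (T1E : T1 = C1 *m T2) (T2E : T2 = C2 *m T1).
Hypotheses (C1_le : forall i j, `|C1 i j| <= b) (C2_le : forall i j, `|C2 i j| <= b).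
Hypotheses (b_lt : b < m%:R) (k_mod : forall i, (m%:Z %| k1 i - k2 i)%Z).
Hypothesis z_mod : forall i j, (m%:Z %| z1 i j - z2 i j)%Z.

Lemma net_diag_eq i : k1 i = k2 i.
Proof.
apply/eqP; rewrite -subr_eq0; apply/eqP; apply: (dvdz_norm_lt (k_mod i) _ b_lt).
have := C1_le i i; have := C2_le i i.
rewrite (net_factor_diag net2 net1 T1E) (net_factor_diag net1 net2 T2E).
rewrite !intrB (ger0_norm (expR_ge0 _)) (ger0_norm (expR_ge0 _)).
have := @expR_ge1Dx R ((k1 i)%:~R - (k2 i)%:~R).
have := @expR_ge1Dx R ((k2 i)%:~R - (k1 i)%:~R).
by rewrite ler_norml => *; apply/andP; split; lra.
Qed.

Lemma net_factor_eq1 : C1 = 1%:M.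
Proof.
suff C1_id s (i j : 'I_n) : (i - j < s)%N -> C1 i j = (i == j)%:R.
  by apply/matrixP => i j; rewrite mxE (C1_id n) // (leq_ltn_trans (leq_subr _ _)).
elim: s i j => // s IH i j; rewrite ltnS leq_eqVlt => /orP [/eqP ijs|]; last exact: IH.
have [ij|ji] := ltnP i j.
  by rewrite (net_factor_trig net2 net1 T1E ij) -val_eqE /= ltn_eqF.
have [->|ji'] := eqVneq j i.
  by rewrite (net_factor_diag net2 net1 T1E) net_diag_eq subrr expR0.
have lt_ji : (j < i)%N.
  by rewrite ltn_neqAle ji andbT; apply: contra_neq ji' => h; apply/val_inj.
have Cil (l : 'I_n) : (j < l)%N -> C1 i l = (i == l)%:R.
  move=> jl; have [il|li] := ltnP i l.
    by rewrite (net_factor_trig net2 net1 T1E il) -val_eqE /= ltn_eqF.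
  by apply: IH; lia.
have CE := net_factor_subdiag net2 net1 T1E lt_ji (esym (net_diag_eq j)) Cil.
by have := C1_le i j; rewrite CE => /(dvdz_norm_lt (z_mod i j))/(_ b_lt) ->.
Qed.

Lemma net_matrix_eq : T1 = T2.
Proof. by rewrite T1E net_factor_eq1 mul1mx. Qed.

End NetUniqueness.

Definition residue (m : nat) (x : int) : 'I_m.+1 := inord (absz (x %% m.+1)%Z).

Lemma residue_dvd (m : nat) (x y : int) :
  residue m x = residue m y -> ((m.+1)%:Z %| x - y)%Z.
Proof.
have m_neq0 : (m.+1)%:Z != 0 by [].
have mod_lt u : (absz (u %% m.+1)%Z < m.+1)%N.
  by have := modz_ge0 u m_neq0; have := ltz_pmod u (isT : (0 < (m.+1)%:Z)); lia.
move=> /(congr1 val); rewrite /= !inordK // => e.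
rewrite -eqz_mod_dvd; apply/eqP.
by rewrite -(gez0_abs (modz_ge0 x m_neq0)) -[RHS](gez0_abs (modz_ge0 y m_neq0)) e.
Qed.

Definition is_net_ellipsoid (R : realType) n (E : set 'rV[R]_n) :=
  exists T k z, net_matrix T k z /\ E = ellipsoid_of T.

Definition net_repr (R : realType) n (E : set 'rV[R]_n) :
    'M[R]_n * ('I_n -> int) * ('I_n -> 'I_n -> int) :=
  if pselect (exists p : 'M[R]_n * ('I_n -> int) * ('I_n -> 'I_n -> int),
                net_matrix p.1.1 p.1.2 p.2 /\ E = ellipsoid_of p.1.1) is left h
  then projT1 (cid h) else (0, fun _ => 0, fun _ _ => 0).

Lemma net_reprP (R : realType) n (E : set 'rV[R]_n) : is_net_ellipsoid E ->
  let: (T, k, z) := net_repr E in net_matrix T k z /\ E = ellipsoid_of T.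
Proof.
move=> [T [k [z h]]]; rewrite /net_repr; case: pselect => [h'|]; last first.
  by case; exists (T, k, z).
by case: (cid h') => -[[]].
Qed.

Definition net_residues (R : realType) n (m : nat) (E : set 'rV[R]_n) :
    {ffun 'I_n -> 'I_m.+1} * {ffun 'I_n * 'I_n -> 'I_m.+1} :=
  let: (_, k, z) := net_repr E in
  ([ffun i => residue m (k i)], [ffun ij => residue m (z ij.1 ij.2)]).

Lemma net_residues_sandwich_eq (R : realType) n (K : set 'rV[R]_n) (alpha : R)
    (m : nat) (E1 E2 : set 'rV[R]_n) : 0 < alpha -> alpha * alpha < m.+1%:R ->
  is_net_ellipsoid E1 -> is_net_ellipsoid E2 -> net_residues m E1 = net_residues m E2 ->
  sandwich alpha K E1 -> sandwich alpha K E2 -> E1 = E2.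
Proof.
move=> alpha_gt0 m_gt /net_reprP + /net_reprP; rewrite /net_residues.
case: (net_repr E1) => -[T1 k1] z1 [net1 ->]; case: (net_repr E2) => -[T2 k2] z2 [net2 ->].
move=> [/ffunP k_res /ffunP z_res] s1 s2.
have [C1 [T1E C1_le]] := sandwich_factor alpha_gt0 s1 s2.
have [C2 [T2E C2_le]] := sandwich_factor alpha_gt0 s2 s1.
congr ellipsoid_of; apply: (net_matrix_eq net1 net2 T1E T2E C1_le C2_le m_gt).
  by move=> i; apply: residue_dvd; have := k_res i; rewrite !ffunE.
by move=> i j; apply: residue_dvd; have := z_res (i, j); rewrite !ffunE.
Qed.

Theorem lemma7p1 (R : realType) (n : nat) (hn : (0 < n)%N) :
  exists alpha0 : R, 1 < alpha0 /\
  forall alpha : R, alpha0 <= alpha ->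
  exists (E0 : set (set 'rV[R]_n)) (C : nat) (colour : set 'rV[R]_n -> 'I_C),
    E0 `<=` is_ellipsoid (n:=n) /\
    (forall K, is_sym_convex_body K -> exists2 E, E0 E & sandwich alpha K E) /\
    (forall K E1 E2, is_sym_convex_body K -> E0 E1 -> E0 E2 ->
       colour E1 = colour E2 -> sandwich alpha K E1 -> sandwich alpha K E2 ->
       E1 = E2).
Proof.
exists (net_alpha0 R n); split; first exact: net_alpha0_gt1.
move=> alpha alpha_ge; pose m := Num.truncn (alpha * alpha).
have alpha_gt0 : 0 < alpha := lt_le_trans (lt_trans ltr01 (net_alpha0_gt1 R hn)) alpha_ge.
exists (@is_net_ellipsoid R n), _, (fun E => enum_rank (net_residues m E)); split; [|split].
- move=> _ [T [k [z [Tnet ->]]]]; exists T; split => //; exact: net_matrix_unitmx Tnet.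
- move=> K Kbody; have [T [k [z [Tnet sT]]]] := exists_net_sandwich hn Kbody alpha_ge.
  by exists (ellipsoid_of T) => //; exists T, k, z.
- move=> K E1 E2 _ E1net E2net /enum_rank_inj.
  exact: net_residues_sandwich_eq alpha_gt0 (truncnS_gt _) E1net E2net.
Qed.
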